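(* In Case I, there exist a smooth volume form $\Omega$ on $X$ and a constant $C>0$ such that for all $t\in[0,T)$, $C^{-1}(T-t)\,\Omega\leqslant \omega(t)^n\leqslant C(T-t)\,\Omega$.
   Context: Setting: $X=X_{n,k}=\mathbb P(\mathcal O_{\mathbb{CP}^{n-1}}\oplus\mathcal O_{\mathbb{CP}^{n-1}}(-k))$, $n\geqslant2,k\geqslant1$, with divisors $D_0,D_\infty$; $\omega(t)$, $t\in[0,T)$, is the solution of $\omega(t)=\omega_0-t\,\mathrm{Ric}(\omega(t))$, $\omega(0)=\omega_0$, with $T=\sup\{t\geqslant0:[\omega_0]-tc_1(X)\text{ Kähler}\}$, where $\omega_0$ is Kähler with Calabi symmetry (on $X\setminus(D_0\cup D_\infty)\cong$ region with coordinates $x\in\mathbb C^n\setminus\{0\}$, $\omega_0=\sqrt{-1}\partial\bar\partial u_0(\rho)$, $\rho=\log\sum|x_i|^2$, with $u_0'>0$, $u_0''>0$ and the standard smooth extension conditions across $D_0,D_\infty$) and class $\frac{b_0}{k}[D_\infty]-\frac{a_0}{k}[D_0]$, $0<a_0<b_0$, $a_0=\lim_{\rho\to-\infty}u_0'$, $b_0=\lim_{\rho\to\infty}u_0'$. Case I: $a_0(n+k)>b_0(n-k)$; then $T=\frac{b_0-a_0}{2k}$ and $a_t=a_0+(k-n)t$ stays $\geqslant\min(a_0,a_T)>0$. *)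

(* Calabi-symmetric reduction of the
   Kahler-Ricci continuity equation on X_{n,k}. *)
From Stdlib Require Import Reals.
From Coquelicot Require Import Coquelicot.
Open Scope R_scope.

Definition smooth (f : R -> R) : Prop :=
  forall (m : nat) (x : R), ex_derive_n f m x.

(* u : R -> R (a function of rho = log |x|^2) is the potential of a
   Calabi-symmetric Kahler form omega = i dd^c u(rho) on X_{n,k} whose
   class is (b/k)[D_inf] - (a/k)[D_0]: u' > 0, u'' > 0 and the standard
   smooth extension conditions across D_0 (rho -> -oo) and D_inf
   (rho -> +oo). *)
Definition calabi_potential (k : nat) (a b : R) (u : R -> R) : Prop :=
  smooth u /\
  (forall r, 0 < Derive u r) /\
  (forall r, 0 < Derive_n u 2 r) /\
  exists v0 vinf : R -> R,
    smooth v0 /\ smooth vinf /\ 0 < Derive v0 0 /\ 0 < Derive vinf 0 /\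
    (forall r, u r = a * r + v0 (exp (INR k * r))) /\
    (forall r, u r = b * r + vinf (exp (- INR k * r))).

(* density of omega^n = (i dd^c u(rho))^n with respect to the Euclidean
   volume form of the x-coordinates (up to a universal constant):
   det g = (u')^(n-1) u'' e^{-n rho}. *)
Definition vol_dens (n : nat) (u : R -> R) (r : R) : R :=
  (Derive u r) ^ (n - 1) * Derive_n u 2 r * exp (- INR n * r).

(* g is such that Omega = g(rho) e^{-n rho} (Euclidean volume, same
   normalising constant) is a smooth (radial) volume form on X_{n,k}:
   positive and smoothly extending, non-vanishing, across D_0 and D_inf. *)
Definition radial_volume_form (k : nat) (g : R -> R) : Prop :=
  (forall r, 0 < g r) /\
  exists G0 Ginf : R -> R,
    smooth G0 /\ smooth Ginf /\ 0 < G0 0 /\ 0 < Ginf 0 /\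
    (forall r, g r = exp (INR k * r) * G0 (exp (INR k * r))) /\
    (forall r, g r = exp (- INR k * r) * Ginf (exp (- INR k * r))).

From Stdlib Require Import Reals Lra Lia Wf_nat.
From Coquelicot Require Import Coquelicot.
Open Scope R_scope.

(* In the Calabi ansatz [omega(t)^n = u'^(n-1) u'' e^{-n rho}] for the potential
   [u = u(t)], and the equation reads [u = u0 + t log omega(t)^n + c].  Comparing the
   linear growth of both sides at the two ends gives the slopes [a_t = a0 + t (k - n)]
   and [b_t = b0 - t (k + n)], so in Case I [u'] stays between [min a0 a_T > 0] and [b0].
   For the reference volume [Omega = exp ((a_T rho - u0) / T)],
   [F = log (omega(t)^n / Omega) = (u - u0 - c) / t - (a_T rho - u0) / T]; wherever
   [F'' <= 0] one has [u'' <= (1 - t/T) u0''], hence [omega(t)^n <= C (T - t) Omega] there.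
   Since [F' -> 0] at both ends, a maximum principle on the line makes the bound global;
   the lower bound is symmetric. *)

Lemma Derive_n_Derive (f : R -> R) (m : nat) (x : R) :
  Derive_n (Derive f) m x = Derive_n f (S m) x.
Proof.
  induction m as [|m IH] in x |- *; [reflexivity|].
  apply Derive_ext; intro; apply IH.
Qed.

Lemma ex_derive_n_S (f : R -> R) (m : nat) (x : R) :
  ex_derive f x -> ex_derive_n (Derive f) m x -> ex_derive_n f (S m) x.
Proof.
  destruct m as [|m]; simpl; intros Hf Hm; [exact Hf|].
  eapply ex_derive_ext; [|exact Hm]. intro; apply Derive_n_Derive.
Qed.

Lemma smooth_ex_derive (f : R -> R) (x : R) : smooth f -> ex_derive f x.
Proof. intro Hf. exact (Hf 1%nat x). Qed.

Lemma smooth_Derive (f : R -> R) : smooth f -> smooth (Derive f).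
Proof.
  intros Hf [|m] x; [exact I|].
  eapply ex_derive_ext; [|exact (Hf (S (S m)) x)].
  intro; symmetry; apply Derive_n_Derive.
Qed.

#[local] Hint Resolve smooth_ex_derive smooth_Derive : smooth.

(* [auto_derive] produces eta-expanded terms such as [Derive (fun x => f x)]
   that [ring] does not identify with [Derive f]. *)
Ltac eta_contract :=
  cbn [Derive_n];
  repeat match goal with
  | |- context [fun x : R => ?f x] => progress change (fun x : R => f x) with f
  end.

Lemma smooth_mult (f g : R -> R) :
  smooth f -> smooth g -> smooth (fun x => f x * g x).
Proof.
  intros Hf Hg m; revert f g Hf Hg.
  induction m as [m IH] using lt_wf_ind; intros f g Hf Hg x.
  destruct m as [|m]; [exact I|].
  apply ex_derive_n_S; [apply ex_derive_mult; auto with smooth|].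
  apply (ex_derive_n_ext (fun y => Derive f y * g y + f y * Derive g y)).
  { intro y; symmetry; apply Derive_mult; auto with smooth. }
  apply ex_derive_n_plus; apply filter_forall; intros y j Hj;
    apply IH; auto with smooth arith.
Qed.

Lemma smooth_exp (w : R -> R) : smooth w -> smooth (fun x => exp (w x)).
Proof.
  intro Hw.
  (* derivatives of [p e^w] stay of the form [q e^w] with [q] smooth *)
  enough (Hpw : forall m p, smooth p -> forall x, ex_derive_n (fun y => p y * exp (w y)) m x).
  { intros m x. apply (ex_derive_n_ext (fun y => 1 * exp (w y))); [intro; ring|].
    apply Hpw. intros j y; apply ex_derive_n_const. }
  induction m as [m IH] using lt_wf_ind; intros p Hp x.
  destruct m as [|m]; [exact I|].
  assert (Hd : forall y, is_derive (fun z => p z * exp (w z)) y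
                 ((Derive p y + p y * Derive w y) * exp (w y))).
  { intro y. auto_derive; [auto with smooth|]. eta_contract; ring. }
  apply ex_derive_n_S; [eexists; apply Hd|].
  apply (ex_derive_n_ext (fun y => (Derive p y + p y * Derive w y) * exp (w y))).
  { intro y; symmetry; apply is_derive_unique, Hd. }
  apply IH; [lia|].
  intros j y. apply ex_derive_n_plus; apply filter_forall; intros z i _.
  - apply smooth_Derive, Hp.
  - apply smooth_mult; auto with smooth.
Qed.

Lemma exp_le_compat (x y : R) : x <= y -> exp x <= exp y.
Proof. intros [H|<-]; [left; apply exp_increasing, H|right; reflexivity]. Qed.

Lemma is_derive_continuity_pt (f : R -> R) (x l : R) :
  is_derive f x l -> continuity_pt f x.
Proof. intro H. apply derivable_continuous_pt. exists l. apply is_derive_Reals, H. Qed.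

Lemma is_derive_pos_right (h : R -> R) (x d : R) :
  is_derive h x d -> 0 < d ->
  exists del, 0 < del /\ forall y, x < y < x + del -> h x < h y.
Proof.
  intros Hh Hd. apply is_derive_Reals in Hh.
  destruct (Hh d Hd) as [del Hdel].
  exists del; split; [apply cond_pos|]. intros y Hy.
  assert (Hyx : Rabs (y - x) < del) by (rewrite Rabs_pos_eq; lra).
  specialize (Hdel (y - x) ltac:(lra) Hyx).
  replace (x + (y - x)) with y in Hdel by ring.
  apply Rabs_def2 in Hdel.
  assert (Hq : 0 < (h y - h x) / (y - x)) by lra.
  apply Rdiv_pos_cases in Hq as [[]|[]]; lra.
Qed.

Section MaximumPrinciple.

Variables (F h dh : R -> R) (B : R).
Hypotheses (HF : forall x, is_derive F x (h x)) (Hh : forall x, is_derive h x (dh x)).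

Lemma strict_increase_right (x : R) :
  0 < dh x -> 0 <= h x -> exists del, 0 < del /\ forall y, x < y < x + del -> F x < F y.
Proof.
  intros Hdh Hhx.
  destruct (is_derive_pos_right h x (dh x) (Hh x) Hdh) as [del [Hdel Hinc]].
  exists del; split; [exact Hdel|]. intros y Hy.
  destruct (MVT_cor2 F h x y) as [c [Hc Hxc]]; [lra|intros; apply is_derive_Reals, HF|].
  assert (h x < h c) by (apply Hinc; lra).
  nra.
Qed.

Hypothesis Hconvex : forall x, B < F x -> 0 < dh x.

(* A maximum of [F] on [x1, x2] can only sit at [x2]: elsewhere [F' >= 0]
   (at [x1] by assumption, inside by Fermat) and [F'' > 0] push [F] higher. *)
Lemma nondecreasing_from (x1 : R) :
  B < F x1 -> 0 <= h x1 -> forall x2, x1 <= x2 -> F x1 <= F x2.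
Proof.
  intros HB Hx1 x2 H12.
  destruct (continuity_ab_maj F x1 x2) as [xm [Hmax Hxm]];
    [exact H12|intros; eapply is_derive_continuity_pt, HF|].
  destruct (Req_dec xm x2) as [<-|Hm2]; [apply Hmax; lra|].
  assert (Hhm : 0 <= h xm).
  { destruct (Req_dec xm x1) as [->|Hm1]; [exact Hx1|].
    right; symmetry.
    apply (deriv_maximum F x1 x2 xm (exist _ (h xm) (proj1 (is_derive_Reals _ _ _) (HF xm))));
      try lra.
    intros; apply Hmax; lra. }
  assert (Hdm : 0 < dh xm) by (apply Hconvex; assert (F x1 <= F xm) by (apply Hmax; lra); lra).
  destruct (strict_increase_right xm Hdm Hhm) as [del [Hdel Hinc]].
  set (y := Rmin (xm + del / 2) x2).
  assert (Hy : xm < y <= x2 /\ y < xm + del)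
    by (unfold y; destruct (Rle_dec (xm + del / 2) x2);
        [rewrite Rmin_left|rewrite Rmin_right]; lra).
  assert (F xm < F y) by (apply Hinc; lra).
  assert (F y <= F xm) by (apply Hmax; lra).
  lra.
Qed.

Lemma max_principle_right (x1 : R) : is_lim h p_infty 0 -> 0 <= h x1 -> F x1 <= B.
Proof.
  intros Hlim Hx1. apply Rnot_lt_le; intro HB.
  assert (Hincr : forall x y, x1 <= x -> x < y -> h x < h y).
  { intros x y Hx Hxy. apply (incr_function_le h x1 p_infty dh); simpl; auto.
    intros z Hz _. apply Hconvex. pose proof (nondecreasing_from x1 HB Hx1 z Hz). lra. }
  set (eta := h (x1 + 1)).
  assert (Heta : 0 < eta) by (pose proof (Hincr x1 (x1 + 1)); unfold eta; lra).
  apply is_lim_spec in Hlim. destruct (Hlim (mkposreal eta Heta)) as [M HM].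
  set (y := Rmax M (x1 + 1) + 1).
  assert (Hy : M < y /\ x1 + 1 < y) by (unfold y; pose proof (Rmax_l M (x1 + 1));
                                        pose proof (Rmax_r M (x1 + 1)); lra).
  specialize (HM y (proj1 Hy)); simpl in HM. rewrite Rminus_0_r in HM.
  apply Rabs_def2 in HM. pose proof (Hincr (x1 + 1) y ltac:(lra) (proj2 Hy)).
  unfold eta in *; lra.
Qed.

End MaximumPrinciple.

Lemma is_lim_reflect (h : R -> R) :
  is_lim h m_infty 0 -> is_lim (fun y => - h (- y)) p_infty 0.
Proof.
  intro Hm. apply is_lim_spec. apply is_lim_spec in Hm.
  intro eps. destruct (Hm eps) as [M HM]. exists (- M). intros y Hy.
  specialize (HM (- y) ltac:(lra)). simpl in *.
  rewrite Rminus_0_r in *. rewrite Rabs_Ropp. exact HM.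
Qed.

(* If [F x > B], then [F] keeps increasing towards the end that [F' x] points to,
   where [F'' > 0] then makes [F'] increase away from [0]. *)
Lemma max_principle_upper (F h dh : R -> R) (B : R) :
  (forall x, is_derive F x (h x)) -> (forall x, is_derive h x (dh x)) ->
  (forall x, B < F x -> 0 < dh x) ->
  is_lim h m_infty 0 -> is_lim h p_infty 0 -> forall x, F x <= B.
Proof.
  intros HF Hh Hconvex Hm Hp x.
  destruct (Rle_or_lt 0 (h x)) as [Hx|Hx].
  - exact (max_principle_right F h dh B HF Hh Hconvex x Hp Hx).
  - rewrite <- (Ropp_involutive x).
    apply (max_principle_right (fun y => F (- y)) (fun y => - h (- y)) (fun y => dh (- y)) B).
    + intro y. eapply is_derive_ext; [intro; reflexivity|].
      replace (- h (- y)) with (-1 * h (- y)) by ring.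
      apply (is_derive_comp F Ropp); [apply HF|].
      auto_derive; [exact I|ring].
    + intro y. replace (dh (- y)) with (-1 * (-1 * dh (- y))) by ring.
      apply (is_derive_comp (fun z => - h z) Ropp); [|auto_derive; [exact I|ring]].
      apply (is_derive_ext (fun z => -1 * h z)); [intro; cbv beta; lra|].
      apply is_derive_scal, Hh.
    + intros y Hy. exact (Hconvex _ Hy).
    + exact (is_lim_reflect h Hm).
    + rewrite Ropp_involutive. lra.
Qed.

Lemma max_principle_lower (F h dh : R -> R) (B : R) :
  (forall x, is_derive F x (h x)) -> (forall x, is_derive h x (dh x)) ->
  (forall x, F x < B -> dh x < 0) ->
  is_lim h m_infty 0 -> is_lim h p_infty 0 -> forall x, B <= F x.
Proof.
  intros HF Hh Hconcave Hm Hp x.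
  enough (- F x <= - B) by lra.
  apply (max_principle_upper (fun y => - F y) (fun y => - h y) (fun y => - dh y)).
  - intro y. apply (is_derive_ext (fun z => -1 * F z)); [intro; cbv beta; lra|].
    replace (- h y) with (-1 * h y) by ring. apply is_derive_scal, HF.
  - intro y. apply (is_derive_ext (fun z => -1 * h z)); [intro; cbv beta; lra|].
    replace (- dh y) with (-1 * dh y) by ring. apply is_derive_scal, Hh.
  - intros y Hy. pose proof (Hconcave y ltac:(lra)). lra.
  - replace (Finite 0) with (Rbar_opp 0) by (simpl; f_equal; ring). now apply is_lim_opp.
  - replace (Finite 0) with (Rbar_opp 0) by (simpl; f_equal; ring). now apply is_lim_opp.
Qed.

Lemma is_lim_linear_ends (s : R) : 0 < s ->
  is_lim (fun r => s * r) m_infty m_infty /\ is_lim (fun r => - s * r) p_infty m_infty.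
Proof.
  intro Hs. split; apply is_lim_spec; intro M; simpl.
  - exists (M / s). intros r Hr.
    apply (Rmult_lt_compat_l s) in Hr; [|exact Hs].
    replace (s * (M / s)) with M in Hr by (field; lra). exact Hr.
  - exists (- M / s). intros r Hr.
    apply (Rmult_lt_compat_l s) in Hr; [|exact Hs].
    replace (s * (- M / s)) with (- M) in Hr by (field; lra). lra.
Qed.

Lemma vol_dens_pos (n : nat) (u : R -> R) (r : R) :
  0 < Derive u r -> 0 < Derive_n u 2 r -> 0 < vol_dens n u r.
Proof.
  intros H1 H2. unfold vol_dens.
  apply Rmult_lt_0_compat; [apply Rmult_lt_0_compat; [apply pow_lt|]|apply exp_pos]; assumption.
Qed.

(* A neighbourhood of [D_0] ([s = k], [r -> -oo]) or of [D_inf] ([s = -k], [r -> +oo]):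
   [y = e^{s r}] is a smooth coordinate vanishing on the divisor. *)
Section CalabiEnd.

Variables (s α : R) (v u : R -> R).
Hypotheses (Hs : s <> 0) (Hv : smooth v) (Hu : forall r, u r = α * r + v (exp (s * r))).

Lemma end_Derive (r : R) :
  Derive u r = α + s * exp (s * r) * Derive v (exp (s * r)).
Proof.
  rewrite (Derive_ext u (fun r => α * r + v (exp (s * r)))) by exact Hu.
  apply is_derive_unique. auto_derive; [auto with smooth|]. eta_contract; ring.
Qed.

Lemma end_Derive2 (r : R) :
  Derive_n u 2 r = s ^ 2 * exp (s * r) *
    (Derive v (exp (s * r)) + exp (s * r) * Derive_n v 2 (exp (s * r))).
Proof.
  simpl. rewrite (Derive_ext (Derive u) (fun r => α + s * exp (s * r) * Derive v (exp (s * r))))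
    by exact end_Derive.
  apply is_derive_unique. auto_derive; [auto with smooth|]. eta_contract; ring.
Qed.

Hypotheses (Hu2 : forall r, 0 < Derive_n u 2 r) (Hv0 : 0 < Derive v 0).

Lemma chart_slope_Derive_pos (y : R) : 0 <= y -> 0 < Derive v y + y * Derive_n v 2 y.
Proof.
  intros [Hy|<-]; [|rewrite Rmult_0_l, Rplus_0_r; exact Hv0].
  pose proof (Hu2 (ln y / s)) as H.
  rewrite end_Derive2 in H.
  replace (s * (ln y / s)) with (ln y) in H by (field; exact Hs).
  rewrite exp_ln in H by exact Hy.
  assert (0 < s ^ 2 * y) by (apply Rmult_lt_0_compat; [apply pow2_gt_0|]; assumption).
  apply Rmult_lt_reg_l with (s ^ 2 * y); [assumption|]. lra.
Qed.

Lemma chart_slope_nonneg (y : R) : 0 <= y -> 0 <= y * Derive v y.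
Proof.
  intro Hy.
  assert (Hd : forall z, is_derive (fun z => z * Derive v z) z
                 (Derive v z + z * Derive_n v 2 z)).
  { intro z. auto_derive; [auto with smooth|]. eta_contract; ring. }
  destruct (MVT_gen (fun z => z * Derive v z) 0 y (fun z => Derive v z + z * Derive_n v 2 z))
    as [c [Hc E]].
  - intros; apply Hd.
  - intros; eapply is_derive_continuity_pt, Hd.
  - rewrite Rmin_left, Rmax_right in Hc by exact Hy.
    pose proof (chart_slope_Derive_pos c (proj1 Hc)).
    rewrite Rmult_0_l, !Rminus_0_r in E. rewrite E. nra.
Qed.

Lemma end_Derive_sign (r : R) : 0 <= s * (Derive u r - α).
Proof.
  rewrite end_Derive.
  replace (s * (α + s * exp (s * r) * Derive v (exp (s * r)) - α))
    with (s ^ 2 * (exp (s * r) * Derive v (exp (s * r)))) by ring.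
  apply Rmult_le_pos; [apply pow2_ge_0|apply chart_slope_nonneg; left; apply exp_pos].
Qed.

Variables (G g : R -> R).
Hypotheses (HG : smooth G) (HG0 : 0 < G 0) (Hgpos : forall r, 0 < g r)
  (Hg : forall r, g r = exp (s * r) * G (exp (s * r))).

Lemma chart_density_pos (y : R) : 0 <= y -> 0 < G y.
Proof.
  intros [Hy|<-]; [|exact HG0].
  pose proof (Hgpos (ln y / s)) as H. rewrite Hg in H.
  replace (s * (ln y / s)) with (ln y) in H by (field; exact Hs).
  rewrite exp_ln in H by exact Hy.
  apply Rmult_lt_reg_l with y; lra.
Qed.

(* On the chart [0 <= y <= 1], [u''/g] is a continuous positive function of [y]. *)
Lemma end_Derive2_comparable :
  exists m M, 0 < m /\ forall r, s * r <= 0 -> m * g r <= Derive_n u 2 r <= M * g r.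
Proof.
  set (Psi := fun y => s ^ 2 * (Derive v y + y * Derive_n v 2 y) / G y).
  assert (HPsi : forall r, Derive_n u 2 r = Psi (exp (s * r)) * g r).
  { intro r. rewrite end_Derive2, Hg. unfold Psi. field.
    apply Rgt_not_eq, chart_density_pos; left; apply exp_pos. }
  assert (Hc : forall y, 0 <= y <= 1 -> continuity_pt Psi y).
  { intros y Hy. apply continuity_pt_filterlim, (ex_derive_continuous Psi).
    unfold Psi. auto_derive. repeat split; auto with smooth.
    apply Rgt_not_eq, chart_density_pos, Hy. }
  assert (Hpos : forall y, 0 <= y <= 1 -> 0 < Psi y).
  { intros y Hy. unfold Psi. apply Rdiv_lt_0_compat; [apply Rmult_lt_0_compat|].
    - apply pow2_gt_0, Hs.
    - apply chart_slope_Derive_pos, Hy.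
    - apply chart_density_pos, Hy. }
  destruct (continuity_ab_min Psi 0 1) as [ym [Hmin Hym]]; [lra|exact Hc|].
  destruct (continuity_ab_maj Psi 0 1) as [yM [Hmax HyM]]; [lra|exact Hc|].
  exists (Psi ym), (Psi yM). split; [apply Hpos, Hym|].
  intros r Hr. rewrite HPsi.
  assert (Hy : 0 <= exp (s * r) <= 1).
  { split; [left; apply exp_pos|rewrite <- exp_0; apply exp_le_compat, Hr]. }
  pose proof (Hgpos r).
  split; apply Rmult_le_compat_r; try lra; [apply Hmin|apply Hmax]; exact Hy.
Qed.

Variable x : Rbar.
Hypothesis Hend : is_lim (fun r => s * r) x m_infty.

Lemma end_chart_lim : is_lim (fun r => exp (s * r)) x 0.
Proof.
  apply (is_lim_comp exp (fun r => s * r) x 0 m_infty); [exact is_lim_exp_m|exact Hend|].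
  apply filter_forall; discriminate.
Qed.

Lemma end_Derive_lim : is_lim (Derive u) x α.
Proof.
  set (q := fun y => α + s * y * Derive v y).
  apply (is_lim_ext (fun r => q (exp (s * r)))); [intro; symmetry; apply end_Derive|].
  replace (Finite α) with (Finite (q 0)) by (unfold q; f_equal; ring).
  apply is_lim_comp_continuous; [exact end_chart_lim|].
  apply (ex_derive_continuous q). unfold q. auto_derive. auto with smooth.
Qed.

(* [s r -> -oo] makes [κ r] unbounded unless [κ = 0], while [Q (exp (s r)) -> Q 0]. *)
Lemma end_linear_coef_zero (κ : R) (Q : R -> R) :
  continuous Q 0 -> (forall r, κ * r = Q (exp (s * r))) -> κ = 0.
Proof.
  intros HQ Hκ.
  destruct (Req_dec κ 0) as [|Hne]; [assumption|exfalso].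
  assert (Hfin : is_lim (fun r => κ * r) x (Q 0)).
  { apply (is_lim_ext (fun r => Q (exp (s * r)))); [intro; symmetry; apply Hκ|].
    exact (is_lim_comp_continuous _ _ _ _ end_chart_lim HQ). }
  assert (Hinf : is_lim (fun r => κ * r) x (Rbar_mult (κ / s) m_infty)).
  { apply (is_lim_ext (fun r => κ / s * (s * r))); [intro; field; exact Hs|].
    apply is_lim_scal_l, Hend. }
  apply is_lim_unique in Hfin. apply is_lim_unique in Hinf.
  rewrite Hfin in Hinf.
  assert (Hks : κ / s <> 0) by (unfold Rdiv; apply Rmult_integral_contrapositive; split;
                                 [exact Hne|apply Rinv_neq_0_compat, Hs]).
  destruct (Rlt_or_le 0 (κ / s)) as [Hpos|Hneg].
  - rewrite (is_Rbar_mult_unique _ _ m_infty) in Hinf; [discriminate|].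
    apply is_Rbar_mult_sym, is_Rbar_mult_m_infty_pos, Hpos.
  - rewrite (is_Rbar_mult_unique _ _ p_infty) in Hinf; [discriminate|].
    apply is_Rbar_mult_sym, is_Rbar_mult_m_infty_neg; simpl; lra.
Qed.

(* Both sides of the equation are linear in [r] up to a function of [e^{s r}] that
   is continuous at [0], and the linear parts must agree. *)
Lemma end_slope_evolution (n : nat) (t c α0 : R) (w u0 : R -> R) :
  smooth w -> (forall r, u0 r = α0 * r + w (exp (s * r))) ->
  0 < α -> (forall r, 0 < Derive u r) ->
  (forall r, u r = u0 r + t * ln (vol_dens n u r) + c) ->
  α = α0 + t * (s - INR n).
Proof.
  intros Hw Hu0 Hα Hu1 Heq.
  set (Phi := fun y => (α + s * y * Derive v y) ^ (n - 1) *
                       (s ^ 2 * (Derive v y + y * Derive_n v 2 y))).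
  assert (Hvol : forall r, vol_dens n u r = Phi (exp (s * r)) * exp ((s - INR n) * r)).
  { intro r. unfold vol_dens, Phi. rewrite end_Derive, end_Derive2.
    replace ((s - INR n) * r) with (s * r + - INR n * r) by ring. rewrite exp_plus. ring. }
  assert (HPhi : forall r, 0 < Phi (exp (s * r))).
  { intro r. pose proof (vol_dens_pos n u r (Hu1 r) (Hu2 r)) as H.
    rewrite Hvol in H. pose proof (exp_pos ((s - INR n) * r)).
    apply Rmult_lt_reg_r with (exp ((s - INR n) * r)); lra. }
  enough (α - α0 - t * (s - INR n) = 0) by lra.
  apply (end_linear_coef_zero _ (fun y => w y - v y + t * ln (Phi y) + c)).
  - apply (ex_derive_continuous (fun y => w y - v y + t * ln (Phi y) + c)).
    assert (0 < Phi 0).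
    { unfold Phi. rewrite Rmult_0_r, Rmult_0_l, Rplus_0_r, Rmult_0_l, Rplus_0_r.
      apply Rmult_lt_0_compat; [apply pow_lt, Hα|apply Rmult_lt_0_compat].
      - apply pow2_gt_0, Hs.
      - exact Hv0. }
    unfold Phi in *. auto_derive. repeat split; auto with smooth.
  - intro r. pose proof (Heq r) as E.
    rewrite Hu, Hu0, Hvol, ln_mult, ln_exp in E by (auto using exp_pos).
    lra.
Qed.

End CalabiEnd.

Lemma calabi_potential_Derive_bounds (k : nat) (a b : R) (u : R -> R) :
  (1 <= k)%nat -> calabi_potential k a b u -> forall r, a <= Derive u r <= b.
Proof.
  intros Hk (_ & _ & Hu2 & v & vi & Hv & Hvi & Hv0 & Hvi0 & E & Ei) r.
  assert (HK : 0 < INR k) by (apply lt_0_INR; lia).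
  pose proof (end_Derive_sign (INR k) a v u ltac:(lra) Hv E Hu2 Hv0 r).
  pose proof (end_Derive_sign (- INR k) b vi u ltac:(lra) Hvi Ei Hu2 Hvi0 r).
  split; nra.
Qed.

Lemma calabi_potential_Derive_lim (k : nat) (a b : R) (u : R -> R) :
  (1 <= k)%nat -> calabi_potential k a b u ->
  is_lim (Derive u) m_infty a /\ is_lim (Derive u) p_infty b.
Proof.
  intros Hk (_ & _ & _ & v & vi & Hv & Hvi & _ & _ & E & Ei).
  destruct (is_lim_linear_ends (INR k)) as [Hm Hp]; [apply lt_0_INR; lia|].
  split; [exact (end_Derive_lim _ _ v u Hv E _ Hm)|exact (end_Derive_lim _ _ vi u Hvi Ei _ Hp)].
Qed.

Lemma calabi_potential_slopes (n k : nat) (a b a0 b0 t c : R) (u u0 : R -> R) :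
  (1 <= k)%nat -> 0 < a < b ->
  calabi_potential k a b u -> calabi_potential k a0 b0 u0 ->
  (forall r, u r = u0 r + t * ln (vol_dens n u r) + c) ->
  a = a0 + t * (INR k - INR n) /\ b = b0 - t * (INR k + INR n).
Proof.
  intros Hk Hab (_ & Hu1 & Hu2 & v & vi & Hv & Hvi & Hv0 & Hvi0 & E & Ei)
    (_ & _ & _ & w & wi & Hw & Hwi & _ & _ & E0 & Ei0) Heq.
  assert (HK : 0 < INR k) by (apply lt_0_INR; lia).
  destruct (is_lim_linear_ends (INR k) HK) as [Hm Hp].
  split.
  - exact (end_slope_evolution (INR k) a v u ltac:(lra) Hv E Hu2 Hv0 _ Hm n t c a0 w u0 Hw E0
             (proj1 Hab) Hu1 Heq).
  - replace (b0 - t * (INR k + INR n)) with (b0 + t * (- INR k - INR n)) by ring.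
    exact (end_slope_evolution (- INR k) b vi u ltac:(lra) Hvi Ei Hu2 Hvi0 _ Hp
             n t c b0 wi u0 Hwi Ei0
             (Rlt_trans _ _ _ (proj1 Hab) (proj2 Hab)) Hu1 Heq).
Qed.

Lemma calabi_Derive2_comparable (k : nat) (a b : R) (u g : R -> R) :
  (1 <= k)%nat -> calabi_potential k a b u -> radial_volume_form k g ->
  exists m M, 0 < m /\ forall r, m * g r <= Derive_n u 2 r <= M * g r.
Proof.
  intros Hk (_ & _ & Hu2 & v & vi & Hv & Hvi & Hv0 & Hvi0 & E & Ei)
    (Hg & G & Gi & HG & HGi & HG0 & HGi0 & Eg & Egi).
  assert (HK : 0 < INR k) by (apply lt_0_INR; lia).
  destruct (end_Derive2_comparable (INR k) a v u ltac:(lra) Hv E Hu2 Hv0 G g HG HG0 Hg Eg)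
    as [m1 [M1 [Hm1 H1]]].
  destruct (end_Derive2_comparable (- INR k) b vi u ltac:(lra) Hvi Ei Hu2 Hvi0
              Gi g HGi HGi0 Hg Egi)
    as [m2 [M2 [Hm2 H2]]].
  exists (Rmin m1 m2), (Rmax M1 M2). split; [apply Rmin_glb_lt; assumption|].
  intro r. pose proof (Hg r).
  pose proof (Rmin_l m1 m2). pose proof (Rmin_r m1 m2).
  pose proof (Rmax_l M1 M2). pose proof (Rmax_r M1 M2).
  destruct (Rle_or_lt r 0) as [Hr|Hr].
  - destruct (H1 r ltac:(nra)). split; nra.
  - destruct (H2 r ltac:(nra)). split; nra.
Qed.

Lemma two_sided_constant (l L : R) : 0 < l -> 0 < L -> exists C, 0 < C /\ / C <= l /\ L <= C.
Proof.
  intros Hl HL. exists (Rmax L (/ l)).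
  pose proof (Rmax_l L (/ l)). pose proof (Rmax_r L (/ l)).
  assert (0 < / l) by (apply Rinv_0_lt_compat, Hl).
  repeat split; [lra| |assumption].
  rewrite <- (Rinv_inv l) at 2. apply Rinv_le_contravar; assumption.
Qed.

Definition collapse_time (k : nat) (a0 b0 : R) : R := (b0 - a0) / (2 * INR k).

(* The common limit of the slopes [a_t] and [b_t] at [t = T]. *)
Definition terminal_slope (n k : nat) (a0 b0 : R) : R :=
  a0 + (INR k - INR n) * collapse_time k a0 b0.

(* [Omega = g e^{-n rho} = exp ((a_T rho - u0) / T)] makes [log (omega(t)^n / Omega)]
   an explicit combination of [u(t)] and [u0]. *)
Definition reference_density (n k : nat) (a0 b0 : R) (u0 : R -> R) (r : R) : R :=
  exp ((terminal_slope n k a0 b0 * r - u0 r) / collapse_time k a0 b0 + INR n * r).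

Section CaseI.

Variables (n k : nat) (a0 b0 : R) (u0 : R -> R).
Hypotheses (Hk : (1 <= k)%nat) (Ha0 : 0 < a0) (Hab : a0 < b0)
  (Hu0 : calabi_potential k a0 b0 u0)
  (HcaseI : a0 * (INR n + INR k) > b0 * (INR n - INR k)).

Local Notation K := (INR k).
Local Notation N := (INR n).
Local Notation T := (collapse_time k a0 b0).
Local Notation aT := (terminal_slope n k a0 b0).
Local Notation g := (reference_density n k a0 b0 u0).

Lemma K_pos : 0 < K.
Proof. apply lt_0_INR; lia. Qed.

Lemma collapse_time_pos : 0 < T.
Proof. pose proof K_pos. unfold collapse_time. apply Rdiv_lt_0_compat; lra. Qed.

Lemma terminal_slope_pos : 0 < aT.
Proof.
  pose proof K_pos.
  assert (E : aT * (2 * K) = a0 * (N + K) - b0 * (N - K))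
    by (unfold terminal_slope, collapse_time; field; lra).
  nra.
Qed.

Lemma terminal_slope_other_end : aT = b0 - (K + N) * T.
Proof. pose proof K_pos. unfold terminal_slope, collapse_time. field. lra. Qed.

Lemma reference_density_radial : radial_volume_form k g.
Proof.
  destruct Hu0 as (_ & _ & _ & v & vi & Hv & Hvi & _ & _ & E & Ei).
  pose proof collapse_time_pos.
  split; [intro; apply exp_pos|].
  exists (fun y => exp (- / T * v y)), (fun y => exp (- / T * vi y)).
  repeat split; try apply exp_pos;
    try (apply smooth_exp; intros j y; apply ex_derive_n_scal_l; auto).
  - intro r. unfold reference_density. rewrite <- exp_plus, E. f_equal.
    unfold terminal_slope. field. lra.
  - intro r. unfold reference_density. rewrite <- exp_plus, Ei, terminal_slope_other_end.
    f_equal. field. lra.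
Qed.

Lemma reference_density_pos (r : R) : 0 < g r.
Proof. apply exp_pos. Qed.

Lemma vol_dens_reference (u : R -> R) (r : R) :
  vol_dens n u r = Derive u r ^ (n - 1) * Derive_n u 2 r / g r * (g r * exp (- N * r)).
Proof.
  unfold vol_dens. field. apply Rgt_not_eq, exp_pos.
Qed.

Lemma reference_volume (r : R) : g r * exp (- N * r) = exp ((aT * r - u0 r) / T).
Proof. unfold reference_density. rewrite <- exp_plus. f_equal. ring. Qed.

Variables (m M : R).
Hypotheses (Hm : 0 < m) (HmM : forall r, m * g r <= Derive_n u0 2 r <= M * g r).

Local Notation amin := (Rmin a0 aT).
Local Notation lower := (amin ^ (n - 1) * m).
Local Notation upper := (b0 ^ (n - 1) * M).

Lemma lower_pos : 0 < lower.
Proof.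
  pose proof terminal_slope_pos.
  apply Rmult_lt_0_compat; [apply pow_lt, Rmin_glb_lt|]; assumption.
Qed.

Lemma upper_pos : 0 < upper.
Proof.
  destruct (HmM 0). pose proof (reference_density_pos 0).
  apply Rmult_lt_0_compat; [apply pow_lt; lra|nra].
Qed.

Lemma density_ratio_upper (u : R -> R) (r L : R) :
  0 < Derive u r <= b0 -> 0 < Derive_n u 2 r <= L * M * g r -> 0 <= L ->
  Derive u r ^ (n - 1) * Derive_n u 2 r / g r <= L * upper.
Proof.
  intros H1 H2 HL. pose proof (reference_density_pos r) as Hg.
  apply Rmult_le_reg_r with (g r); [exact Hg|].
  replace (Derive u r ^ (n - 1) * Derive_n u 2 r / g r * g r)
    with (Derive u r ^ (n - 1) * Derive_n u 2 r) by (field; lra).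
  assert (Hp : Derive u r ^ (n - 1) <= b0 ^ (n - 1)) by (apply pow_incr; lra).
  pose proof (pow_lt (Derive u r) (n - 1) (proj1 H1)).
  replace (L * upper * g r) with (b0 ^ (n - 1) * (L * M * g r)) by ring.
  apply Rmult_le_compat; lra.
Qed.

Lemma density_ratio_lower (u : R -> R) (r L : R) :
  amin <= Derive u r -> L * m * g r <= Derive_n u 2 r -> 0 <= L ->
  L * lower <= Derive u r ^ (n - 1) * Derive_n u 2 r / g r.
Proof.
  intros H1 H2 HL. pose proof (reference_density_pos r) as Hg.
  pose proof terminal_slope_pos. pose proof (Rmin_glb_lt _ _ _ Ha0 H).
  apply Rmult_le_reg_r with (g r); [exact Hg|].
  replace (Derive u r ^ (n - 1) * Derive_n u 2 r / g r * g r)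
    with (Derive u r ^ (n - 1) * Derive_n u 2 r) by (field; lra).
  assert (Hp : amin ^ (n - 1) <= Derive u r ^ (n - 1)) by (apply pow_incr; lra).
  pose proof (pow_lt amin (n - 1) H0).
  replace (L * lower * g r) with (amin ^ (n - 1) * (L * m * g r)) by ring.
  apply Rmult_le_compat; try lra. apply Rmult_le_pos; [apply Rmult_le_pos|]; lra.
Qed.

Lemma initial_bounds (r : R) :
  lower <= Derive u0 r ^ (n - 1) * Derive_n u0 2 r / g r <= upper.
Proof.
  pose proof Hu0 as (_ & Hu1 & Hu2 & _).
  pose proof (calabi_potential_Derive_bounds k a0 b0 u0 Hk Hu0 r).
  pose proof (Rmin_l a0 aT). destruct (HmM r).
  rewrite <- (Rmult_1_l lower), <- (Rmult_1_l upper).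
  split; [apply density_ratio_lower|apply density_ratio_upper]; try split; try lra; auto.
Qed.

Section TimeSlice.

Variables (t c a b : R) (ut : R -> R).
Hypotheses (Ht : 0 < t < T) (Ha : 0 < a) (Hab_t : a < b) (Hut : calabi_potential k a b ut)
  (Heq : forall r, ut r = u0 r + t * ln (vol_dens n ut r) + c).

Let F (r : R) : R := (ut r - u0 r - c) / t - (aT * r - u0 r) / T.
Let h (r : R) : R := (Derive ut r - Derive u0 r) / t - (aT - Derive u0 r) / T.
Let dh (r : R) : R := (Derive_n ut 2 r - (1 - t / T) * Derive_n u0 2 r) / t.

Lemma slice_density_ratio (r : R) :
  Derive ut r ^ (n - 1) * Derive_n ut 2 r / g r = exp (F r).
Proof.
  destruct Hut as (_ & Hu1 & Hu2 & _).
  pose proof (vol_dens_pos n ut r (Hu1 r) (Hu2 r)) as Hvol.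
  pose proof collapse_time_pos.
  assert (Hln : ln (vol_dens n ut r) = (ut r - u0 r - c) / t) by (rewrite (Heq r); field; lra).
  assert (Hsplit : exp ((ut r - u0 r - c) / t) = exp (F r) * exp ((aT * r - u0 r) / T))
    by (rewrite <- exp_plus; f_equal; unfold F; ring).
  apply Rmult_eq_reg_r with (g r * exp (- N * r)).
  - rewrite <- vol_dens_reference, reference_volume, <- Hsplit, <- Hln, exp_ln by exact Hvol.
    reflexivity.
  - apply Rgt_not_eq, Rmult_lt_0_compat; [apply reference_density_pos|apply exp_pos].
Qed.

Lemma slice_dh_scaled (r : R) :
  dh r * t = Derive_n ut 2 r - (1 - t / T) * Derive_n u0 2 r.
Proof. unfold dh. field. lra. Qed.

Lemma slice_F_derive (r : R) : is_derive F r (h r).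
Proof.
  destruct Hut as (Hs & _). destruct Hu0 as (Hs0 & _). pose proof collapse_time_pos.
  unfold F, h. auto_derive; [repeat split; auto with smooth|]. eta_contract. field. lra.
Qed.

Lemma slice_h_derive (r : R) : is_derive h r (dh r).
Proof.
  destruct Hut as (Hs & _). destruct Hu0 as (Hs0 & _). pose proof collapse_time_pos.
  unfold h, dh. auto_derive; [repeat split; auto with smooth|]. eta_contract. field. lra.
Qed.

Lemma slice_h_lim : is_lim h m_infty 0 /\ is_lim h p_infty 0.
Proof.
  destruct (calabi_potential_slopes n k a b a0 b0 t c ut u0 Hk (conj Ha Hab_t) Hut Hu0 Heq)
    as [Ea Eb].
  destruct (calabi_potential_Derive_lim k a b ut Hk Hut) as [Hlm Hlp].
  destruct (calabi_potential_Derive_lim k a0 b0 u0 Hk Hu0) as [Hlm0 Hlp0].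
  assert (Hlim : forall (x : Rbar) (la l0 : R),
             is_lim (Derive ut) x la -> is_lim (Derive u0) x l0 ->
                   is_lim h x ((la - l0) / t - (aT - l0) / T)).
  { intros x la l0 H1 H0. apply is_lim_minus'.
    - apply (is_lim_scal_r (fun r => Derive ut r - Derive u0 r) (/ t) x (la - l0)).
      apply is_lim_minus'; assumption.
    - apply (is_lim_scal_r (fun r => aT - Derive u0 r) (/ T) x (aT - l0)).
      apply is_lim_minus'; [apply is_lim_const|assumption]. }
  pose proof collapse_time_pos.
  split.
  - replace (Finite 0) with (Finite ((a - a0) / t - (aT - a0) / T)); [apply Hlim; assumption|].
    f_equal. rewrite Ea. unfold terminal_slope. field. lra.
  - replace (Finite 0) with (Finite ((b - b0) / t - (aT - b0) / T)); [apply Hlim; assumption|].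
    f_equal. rewrite Eb, terminal_slope_other_end. field. lra.
Qed.

Lemma slice_Derive_bounds (r : R) : amin <= Derive ut r <= b0.
Proof.
  destruct (calabi_potential_slopes n k a b a0 b0 t c ut u0 Hk (conj Ha Hab_t) Hut Hu0 Heq)
    as [Ea Eb].
  pose proof (calabi_potential_Derive_bounds k a b ut Hk Hut r).
  pose proof collapse_time_pos. pose proof (pos_INR k). pose proof (pos_INR n).
  assert (Hλ : 0 < t / T < 1)
    by (split; [apply Rdiv_lt_0_compat|apply (Rdiv_lt_1 t T)]; lra).
  assert (Ea' : a = (1 - t / T) * a0 + t / T * aT)
    by (rewrite Ea; unfold terminal_slope; field; lra).
  pose proof (Rmin_l a0 aT). pose proof (Rmin_r a0 aT).
  assert (0 <= (1 - t / T) * (a0 - amin)) by (apply Rmult_le_pos; lra).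
  assert (0 <= t / T * (aT - amin)) by (apply Rmult_le_pos; lra).
  assert (0 <= t * (INR k + INR n)) by (apply Rmult_le_pos; lra).
  split; lra.
Qed.

Lemma slice_upper (r : R) :
  Derive ut r ^ (n - 1) * Derive_n ut 2 r / g r <= (1 - t / T) * upper.
Proof.
  destruct Hut as (_ & Hu1 & Hu2 & _).
  pose proof collapse_time_pos. pose proof (Rdiv_lt_1 t T).
  assert (HB : 0 < (1 - t / T) * upper) by (pose proof upper_pos; apply Rmult_lt_0_compat; lra).
  rewrite slice_density_ratio, <- (exp_ln _ HB). apply exp_le_compat.
  destruct slice_h_lim as [Hlm Hlp].
  apply (max_principle_upper F h dh _ slice_F_derive slice_h_derive); [|exact Hlm|exact Hlp].
  intros x Hx. apply Rnot_le_lt. intro Hdh.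
  assert (Hconc : Derive_n ut 2 x <= (1 - t / T) * Derive_n u0 2 x)
    by (pose proof (slice_dh_scaled x); nra).
  assert (Hratio : Derive ut x ^ (n - 1) * Derive_n ut 2 x / g x <= (1 - t / T) * upper).
  { apply density_ratio_upper; [| |lra].
    - pose proof (slice_Derive_bounds x). split; [apply Hu1|lra].
    - destruct (HmM x). split; [apply Hu2|nra]. }
  rewrite slice_density_ratio in Hratio.
  apply ln_le in Hratio; [|apply exp_pos]. rewrite ln_exp in Hratio. lra.
Qed.

Lemma slice_lower (r : R) :
  (1 - t / T) * lower <= Derive ut r ^ (n - 1) * Derive_n ut 2 r / g r.
Proof.
  destruct Hut as (_ & Hu1 & Hu2 & _).
  pose proof collapse_time_pos. pose proof (Rdiv_lt_1 t T).
  assert (HB : 0 < (1 - t / T) * lower) by (pose proof lower_pos; apply Rmult_lt_0_compat; lra).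
  rewrite slice_density_ratio, <- (exp_ln _ HB). apply exp_le_compat.
  destruct slice_h_lim as [Hlm Hlp].
  apply (max_principle_lower F h dh _ slice_F_derive slice_h_derive); [|exact Hlm|exact Hlp].
  intros x Hx. apply Rnot_le_lt. intro Hdh.
  assert (Hconv : (1 - t / T) * Derive_n u0 2 x <= Derive_n ut 2 x)
    by (pose proof (slice_dh_scaled x); nra).
  assert (Hratio : (1 - t / T) * lower <= Derive ut x ^ (n - 1) * Derive_n ut 2 x / g x).
  { apply density_ratio_lower; [apply slice_Derive_bounds| |lra].
    destruct (HmM x). nra. }
  rewrite slice_density_ratio in Hratio.
  apply ln_le in Hratio; [|exact HB]. rewrite ln_exp in Hratio. lra.
Qed.

End TimeSlice.

Lemma density_ratio_bounds (u : R -> R -> R) :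
  (forall r, u 0 r = u0 r) ->
  (forall t, 0 <= t < T -> exists a b, 0 < a < b /\ calabi_potential k a b (u t)) ->
  (forall t, 0 <= t < T ->
     exists c, forall r, u t r = u0 r + t * ln (vol_dens n (u t) r) + c) ->
  forall t r, 0 <= t < T ->
    (1 - t / T) * lower <= Derive (u t) r ^ (n - 1) * Derive_n (u t) 2 r / g r
    <= (1 - t / T) * upper.
Proof.
  intros Hinit Hcal Heq t r Ht.
  destruct (Req_dec t 0) as [->|Ht0].
  - pose proof collapse_time_pos.
    rewrite (Derive_ext (u 0) u0), (Derive_n_ext (u 0) u0) by exact Hinit.
    replace (1 - 0 / T) with 1 by (field; lra). rewrite !Rmult_1_l. apply initial_bounds.
  - destruct (Hcal t Ht) as (a & b & [Ha Hab_t] & Hut). destruct (Heq t Ht) as [c Hc].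
    assert (Ht' : 0 < t < T) by lra.
    split; [exact (slice_lower t c a b (u t) Ht' Ha Hab_t Hut Hc r)
           |exact (slice_upper t c a b (u t) Ht' Ha Hab_t Hut Hc r)].
Qed.

Lemma vol_dens_comparable (u : R -> R -> R) :
  (forall r, u 0 r = u0 r) ->
  (forall t, 0 <= t < T -> exists a b, 0 < a < b /\ calabi_potential k a b (u t)) ->
  (forall t, 0 <= t < T ->
     exists c, forall r, u t r = u0 r + t * ln (vol_dens n (u t) r) + c) ->
  exists C, 0 < C /\ forall t r, 0 <= t < T ->
    / C * (T - t) * (g r * exp (- N * r)) <= vol_dens n (u t) r /\
    vol_dens n (u t) r <= C * (T - t) * (g r * exp (- N * r)).
Proof.
  intros Hinit Hcal Heq.
  pose proof collapse_time_pos. pose proof lower_pos. pose proof upper_pos.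
  destruct (two_sided_constant (lower / T) (upper / T)) as (C & HC & HCl & HCu);
    try (apply Rdiv_lt_0_compat; assumption).
  exists C. split; [exact HC|]. intros t r Ht.
  pose proof (density_ratio_bounds u Hinit Hcal Heq t r Ht) as Hratio.
  rewrite vol_dens_reference.
  pose proof (Rmult_lt_0_compat _ _ (reference_density_pos r) (exp_pos (- N * r))).
  replace (1 - t / T) with ((T - t) / T) in Hratio by (field; lra).
  split; apply Rmult_le_compat_r; try lra.
  - apply Rle_trans with ((T - t) / T * lower); [|apply Hratio].
    replace ((T - t) / T * lower) with ((T - t) * (lower / T)) by (field; lra).
    rewrite (Rmult_comm (/ C)). apply Rmult_le_compat_l; lra.
  - apply Rle_trans with ((T - t) / T * upper); [apply Hratio|].
    replace ((T - t) / T * upper) with ((T - t) * (upper / T)) by (field; lra).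
    rewrite (Rmult_comm C). apply Rmult_le_compat_l; lra.
Qed.

End CaseI.

Theorem mainTheorem4 :
  forall (n k : nat) (a0 b0 : R) (u0 : R -> R) (u : R -> R -> R),
    (2 <= n)%nat -> (1 <= k)%nat ->
    0 < a0 -> a0 < b0 ->
    calabi_potential k a0 b0 u0 ->
    (* Case I *)
    a0 * (INR n + INR k) > b0 * (INR n - INR k) ->
    let T := (b0 - a0) / (2 * INR k) in
    (forall r, u 0 r = u0 r) ->
    (* omega(t) = i dd^c u t is a smooth Kahler form on X for t in [0,T) *)
    (forall t, 0 <= t < T ->
       exists a b, 0 < a < b /\ calabi_potential k a b (u t)) ->
    (* omega(t) = omega_0 - t Ric(omega(t)) *)
    (forall t, 0 <= t < T ->
       exists c, forall r, u t r = u0 r + t * ln (vol_dens n (u t) r) + c) ->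
    exists (g : R -> R) (C : R),
      radial_volume_form k g /\ 0 < C /\
      forall t r, 0 <= t < T ->
        / C * (T - t) * (g r * exp (- INR n * r)) <= vol_dens n (u t) r /\
        vol_dens n (u t) r <= C * (T - t) * (g r * exp (- INR n * r)).
Proof.
  intros n k a0 b0 u0 u _ Hk Ha0 Hab Hu0 HcaseI T Hinit Hcal Heq.
  pose proof (reference_density_radial n k a0 b0 u0 Hk Hab Hu0) as Hrad.
  destruct (calabi_Derive2_comparable k a0 b0 u0 _ Hk Hu0 Hrad) as (m & M & Hm & HmM).
  destruct (vol_dens_comparable n k a0 b0 u0 Hk Ha0 Hab Hu0 HcaseI m M Hm HmM u Hinit Hcal Heq)
    as (C & HC & Hbounds).
  exists (reference_density n k a0 b0 u0), C. split; [exact Hrad|split; [exact HC|exact Hbounds]].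
Qed.
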